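(* Let $(M,\circ)$ be a fuzzy $\Gamma$-hypersemigroup. Then (i) $\chi_M$ is a left fuzzy $\Gamma$-hyperideal of $(M,\circ)$; (ii) $\chi_M\circ\gamma\circ m=M\circ\gamma\circ m$ for all $m\in M$, $\gamma\in\Gamma$; (iii) $M\circ\gamma\circ m$ is a left fuzzy $\Gamma$-hyperideal of $(M,\circ)$ for all $m\in M$, $\gamma\in\Gamma$; (iv) for any fuzzy subset $\mu\ne0$ of $M$, $\chi_M\circ\gamma\circ\mu$ is a left fuzzy $\Gamma$-hyperideal of $(M,\circ)$ for all $\gamma\in\Gamma$.
   Context: $M,\Gamma$ are nonempty sets; a fuzzy subset of $M$ is a map $M\to[0,1]$. A fuzzy $\Gamma$-hyperoperation assigns to each $(a,\gamma,b)\in M\times\Gamma\times M$ a fuzzy subset $a\circ\gamma\circ b$. For $a\in M$ and fuzzy $\mu$: $(a\circ\gamma\circ\mu)(r)=\bigvee_{t\in M}((a\circ\gamma\circ t)(r)\wedge\mu(t))$ if $\mu\ne0$, else $0$; $(\mu\circ\gamma\circ a)(r)=\bigvee_{t\in M}(\mu(t)\wedge(t\circ\gamma\circ a)(r))$ if $\mu\ne0$, else $0$. For fuzzy $\mu,\nu$: $(\mu\circ\gamma\circ\nu)(t)=\bigvee_{p,q\in M}(\mu(p)\wedge(p\circ\gamma\circ q)(t)\wedge\nu(q))$. $(M,\circ)$ is a fuzzy $\Gamma$-hypersemigroup if $(a\circ\alpha\circ b)\circ\beta\circ c=a\circ\alpha\circ(b\circ\beta\circ c)$ for all $a,b,c\in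 M$, $\alpha,\beta\in\Gamma$. $\chi_M$ is the constant function $1$ on $M$. $M\circ\gamma\circ m$ denotes the fuzzy subset $t\mapsto\bigvee_{p\in M}(p\circ\gamma\circ m)(t)$. For fuzzy sets, $\mu\subseteq\nu$ means $\mu(x)\le\nu(x)$ for all $x$. A fuzzy subset $\mu$ is a left fuzzy $\Gamma$-hyperideal if $a\circ\gamma\circ\mu\subseteq\mu$ for all $a\in M$, $\gamma\in\Gamma$. *)

From HB Require Import structures.
From mathcomp Require Import all_boot all_order all_algebra.
From mathcomp Require Import boolp classical_sets reals.
Set Implicit Arguments. Unset Strict Implicit. Unset Printing Implicit Defensive.
Import Order.TTheory GRing.Theory Num.Theory.
Local Open Scope ring_scope.
Local Open Scope classical_set_scope.

Section FuzzyGamma.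
Variables (R : realType) (M Gam : Type).

Definition is_fuzzy (mu : M -> R) : Prop := forall x, 0 <= mu x <= 1.

(* a fuzzy Gamma-hyperoperation: (a, g, b) |-> fuzzy subset a o g o b *)
Definition is_fuzzy_hyperop (op : M -> Gam -> M -> M -> R) : Prop :=
  forall a g b, is_fuzzy (op a g b).

Definition chiM : M -> R := fun _ => 1.

Definition el_fz (op : M -> Gam -> M -> M -> R) (a : M) (g : Gam) (mu : M -> R)
  : M -> R := fun r =>
  if `[< mu = (fun _ => 0) >] then 0
  else sup (range (fun t => Num.min (op a g t r) (mu t))).

Definition fz_el (op : M -> Gam -> M -> M -> R) (mu : M -> R) (g : Gam) (a : M)
  : M -> R := fun r =>
  if `[< mu = (fun _ => 0) >] then 0
  else sup (range (fun t => Num.min (mu t) (op t g a r))).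

Definition fz_fz (op : M -> Gam -> M -> M -> R) (mu : M -> R) (g : Gam) (nu : M -> R)
  : M -> R := fun t =>
  sup (range (fun pq : M * M =>
         Num.min (Num.min (mu pq.1) (op pq.1 g pq.2 t)) (nu pq.2))).

Definition M_el (op : M -> Gam -> M -> M -> R) (g : Gam) (m : M) : M -> R :=
  fun t => sup (range (fun p => op p g m t)).

Definition is_fuzzy_Gamma_hypersemigroup (op : M -> Gam -> M -> M -> R) : Prop :=
  is_fuzzy_hyperop op /\
  forall a b c (al be : Gam), fz_el op (op a al b) be c = el_fz op a al (op b be c).

Definition fsubset (mu nu : M -> R) : Prop := forall x, mu x <= nu x.

Definition left_fuzzy_hyperideal (op : M -> Gam -> M -> M -> R) (mu : M -> R) : Prop :=
  is_fuzzy mu /\ forall a g, fsubset (el_fz op a g mu) mu.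

End FuzzyGamma.

(* A minimum against a supremum is bounded by B as soon as each minimum against
   a single term is.  So for (iii) it suffices to bound, for all p and t,
   min ((a o g' o t)(r), (p o g o m)(t)); it is at most
   (a o g' o (p o g o m))(r) = ((a o g' o p) o g o m)(r) by associativity, a
   supremum of terms at most (s o g o m)(r) <= (M o g o m)(r).  Part (iv) is
   the same computation carrying the extra factor mu(q), and (i), (ii) only use
   that membership degrees lie in [0,1]. *)
From HB Require Import structures.
From mathcomp Require Import all_boot all_order all_algebra.
From mathcomp Require Import boolp classical_sets reals.
Import Order.TTheory GRing.Theory Num.Theory.
Local Open Scope ring_scope.
Local Open Scope classical_set_scope.

Section SupRange.
Variables (R : realType) (T : Type) (f : T -> R).

Lemma le_sup_range (B : R) (x : T) : (forall y, f y <= B) -> f x <= sup (range f).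
Proof. by move=> fB; apply: ub_le_sup; [exists B => _ [y _ <-] | exists x]. Qed.

Lemma sup_range_le (B : R) : inhabited T -> (forall y, f y <= B) -> sup (range f) <= B.
Proof. by case=> x0 fB; apply: ge_sup => [|_ [y _ <-]]; [exists (f x0), x0 | ]. Qed.

Lemma min_sup_range_le (x B : R) : inhabited T ->
  (forall y, Num.min x (f y) <= B) -> Num.min x (sup (range f)) <= B.
Proof.
case=> x0 minB; rewrite leNgt lt_min; apply/negP => /andP[Bx /sup_gt].
case=> [|_ [y _ <-] Bfy]; first by exists (f x0), x0.
by have := minB y; rewrite leNgt lt_min Bx Bfy.
Qed.

End SupRange.

Arguments le_sup_range {R T f}.
Arguments sup_range_le {R T f}.
Arguments min_sup_range_le {R T f}.

Section FuzzyGammaHypersemigroup.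
Context {R : realType} {M Gam : Type} {op : M -> Gam -> M -> M -> R}.
Hypotheses (M0 : inhabited M) (op_fuzzy : is_fuzzy_hyperop op).

Lemma op_ge0 a g b t : 0 <= op a g b t.
Proof. by case/andP: (op_fuzzy a g b t). Qed.

Lemma op_le1 a g b t : op a g b t <= 1.
Proof. by case/andP: (op_fuzzy a g b t). Qed.

Lemma chiM_neq0 : @chiM R M <> (fun _ => 0).
Proof.
by case: M0 => x0 /(congr1 (fun h => h x0)) /eqP; rewrite /chiM oner_eq0.
Qed.

Lemma el_fz_ub a g nu t r : Num.min (op a g t r) (nu t) <= el_fz op a g nu r.
Proof.
rewrite /el_fz; case: asboolP => [-> | _]; first by rewrite ge_min lexx orbT.
by apply: (le_sup_range 1 t) => y; rewrite ge_min op_le1.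
Qed.

Lemma el_fz_le a g nu r B : 0 <= B ->
  (forall t, Num.min (op a g t r) (nu t) <= B) -> el_fz op a g nu r <= B.
Proof. by rewrite /el_fz => B0 minB; case: asboolP => // _; apply: sup_range_le. Qed.

Lemma M_el_ub p g m t : op p g m t <= M_el op g m t.
Proof. by rewrite /M_el; apply: (le_sup_range 1 p) => s; apply: op_le1. Qed.

Lemma M_el_fuzzy g m : is_fuzzy (M_el op g m).
Proof.
case: M0 => x0 t; rewrite (le_trans (op_ge0 x0 g m t) (M_el_ub x0 g m t)) /=.
by apply: sup_range_le => // p; apply: op_le1.
Qed.

Lemma fz_el_chiM g m : fz_el op (@chiM R M) g m = M_el op g m.
Proof.
apply: funext => r; rewrite /fz_el /M_el asboolF; last exact: chiM_neq0.
by congr (sup (image _ _)); apply: funext => t; apply/min_idPr/op_le1.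
Qed.

Lemma fz_el_le_M_el nu g m r : fz_el op nu g m r <= M_el op g m r.
Proof.
rewrite /fz_el; case: asboolP => _; first by case/andP: (M_el_fuzzy g m r).
apply: sup_range_le => // s.
by rewrite ge_min (M_el_ub s) orbT.
Qed.

Lemma chiM_left_fuzzy_hyperideal : left_fuzzy_hyperideal op (@chiM R M).
Proof.
split=> [x | a g r]; first by rewrite /chiM ler01 lexx.
by apply: el_fz_le => [|t]; rewrite /chiM ?ler01 // ge_min lexx orbT.
Qed.

Lemma fz_fz_chiM g mu t : fz_fz op (@chiM R M) g mu t
  = sup (range (fun pq : M * M => Num.min (op pq.1 g pq.2 t) (mu pq.2))).
Proof.
congr (sup (image _ _)); apply: funext => pq.
by rewrite /chiM (min_idPr (op_le1 _ _ _ _)).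
Qed.

Lemma fz_fz_chiM_ub g mu p q t :
  Num.min (op p g q t) (mu q) <= fz_fz op (@chiM R M) g mu t.
Proof.
rewrite fz_fz_chiM; apply: (le_sup_range 1 (p, q)) => pq.
by rewrite ge_min op_le1.
Qed.

Lemma fz_fz_chiM_fuzzy g mu : is_fuzzy mu -> is_fuzzy (fz_fz op (@chiM R M) g mu).
Proof.
case: M0 => x0 mu01 t; apply/andP; split.
  apply: le_trans (fz_fz_chiM_ub g mu x0 x0 t).
  by case/andP: (mu01 x0) => mu0 _; rewrite le_min op_ge0.
rewrite fz_fz_chiM; apply: sup_range_le => [|pq]; first exact: inhabits (x0, x0).
by rewrite ge_min op_le1.
Qed.

Lemma min_fz_el_le_fz_fz_chiM nu g mu q r :
  Num.min (fz_el op nu g q r) (mu q) <= fz_fz op (@chiM R M) g mu r.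
Proof.
case: M0 => x0; rewrite /fz_el; case: asboolP => _.
  exact: le_trans (le_min2 (op_ge0 x0 g q r) (lexx _)) (fz_fz_chiM_ub _ _ _ _ _).
rewrite minC; apply: min_sup_range_le => // s; rewrite minC.
apply: le_trans (fz_fz_chiM_ub g mu s q r).
by rewrite le_min2 // ge_min lexx orbT.
Qed.

Hypothesis op_assoc : forall a b c (al be : Gam),
  fz_el op (op a al b) be c = el_fz op a al (op b be c).

Lemma M_el_left_fuzzy_hyperideal g m : left_fuzzy_hyperideal op (M_el op g m).
Proof.
split=> [|a g' r]; first exact: M_el_fuzzy.
apply: el_fz_le => [|t]; first by case/andP: (M_el_fuzzy g m r).
apply: min_sup_range_le => // p.
apply: le_trans (el_fz_ub a g' (op p g m) t r) _.
by rewrite -op_assoc fz_el_le_M_el.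
Qed.

Lemma fz_fz_chiM_left_fuzzy_hyperideal g mu :
  is_fuzzy mu -> left_fuzzy_hyperideal op (fz_fz op (@chiM R M) g mu).
Proof.
move=> mu01; case: M0 => x0; have F01 := fz_fz_chiM_fuzzy g mu mu01.
split=> // a g' r; apply: el_fz_le => [|t]; first by case/andP: (F01 r).
rewrite fz_fz_chiM; apply: min_sup_range_le; first exact: inhabits (x0, x0).
move=> [p q] /=; rewrite minA.
apply: le_trans (le_min2 (el_fz_ub a g' (op p g q) t r) (lexx _)) _.
by rewrite -op_assoc min_fz_el_le_fz_fz_chiM.
Qed.

End FuzzyGammaHypersemigroup.

Theorem theorem4p6 (R : realType) (M Gam : Type)
  (HM : inhabited M) (HG : inhabited Gam)
  (op : M -> Gam -> M -> M -> R)
  (Hop : is_fuzzy_Gamma_hypersemigroup op) :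
  left_fuzzy_hyperideal op (@chiM R M)
  /\ (forall (m : M) (g : Gam), fz_el op (@chiM R M) g m = M_el op g m)
  /\ (forall (m : M) (g : Gam), left_fuzzy_hyperideal op (M_el op g m))
  /\ (forall mu : M -> R, is_fuzzy mu -> mu <> (fun _ => 0) ->
        forall g : Gam, left_fuzzy_hyperideal op (fz_fz op (@chiM R M) g mu)).
Proof.
case: Hop => op_fuzzy op_assoc.
split; first exact: chiM_left_fuzzy_hyperideal HM.
split; first by move=> m g; apply: fz_el_chiM.
split; first by move=> m g; apply: M_el_left_fuzzy_hyperideal.
by move=> mu mu01 _ g; apply: fz_fz_chiM_left_fuzzy_hyperideal.
Qed.
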